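(* If $f,g\in \ker\mathfrak{d}$, then $[f,g]_n\in \ker\mathfrak{d}$.
   Context: $\mathscr{P}$ is the set of partitions, $r_m(\lambda)$ the number of parts of $\lambda$ equal to $m$. The Faulhaber polynomial $F_l$ is the polynomial with zero constant term with $F_l(n)=\sum_{i=1}^n i^{l-1}$ for $n\ge1$. For $k\ge0,l\ge1$, $k+l$ even, $T_{k,l}(\lambda)=-\frac{B_{k+l}}{2(k+l)}(\delta_{l,1}+\delta_{k,0})+\sum_{m\ge1}m^kF_l(r_m(\lambda))$, with conventions $T_{0,0}\equiv T_{-1,1}\equiv-1$ and $T_{k,l}\equiv0$ for other $k<0$ or $l<1$. $\mathcal{T}$ is the algebra generated by the $T_{k,l}$; it has a basis of induced products $T_{k_1,l_1}\odot\cdots\odot T_{k_n,l_n}$ (with $\langle f\odot g\rangle_{\vec u}=\langle f\rangle_{\vec u}\langle g\rangle_{\vec u}$, $\langle f\rangle_{\vec u}=\sum_\lambda f(\lambda)u_{\lambda_1}u_{\lambda_2}\cdots/\sum_\lambda u_{\lambda_1}u_{\lambda_2}\cdots$), graded by assigning $T_{k,l}$ weight $k+l$. Derivations on $\mathcal{T}$: $D\,T_{k,l}=T_{k+1,l+1}$, $W\,T_{k,l}=(k+l)T_{k,l}$, $\mathfrak{d}\,T_{k,l}=k(l-1)T_{k-1,l-1}-\tfrac12\delta_{k+l-2}$ ($\delta_{k+l-2}=1$ iff $k+l=2$). For $f$ of weight $k$, $g$ of weight $l$ in $\mathcal{T}$ and $n\ge0$, the $n$th Rankin–Cohen bracket is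 $[f,g]_n=\sum_{r+s=n}(-1)^r\binom{k+n-1}{s}\binom{l+n-1}{r}D^rf\odot D^sg$. *)

From HB Require Import structures.
From mathcomp Require Import all_boot all_order all_algebra.
From mathcomp Require Import finmap.
From mathcomp Require Import monalg.
Set Implicit Arguments.
Unset Strict Implicit.
Unset Printing Implicit Defensive.
Import Order.TTheory GRing.Theory Num.Theory.
Local Open Scope ring_scope.

Definition Tidx := {p : nat * nat | (0 < p.2)%N && ~~ odd (p.1 + p.2)}.

(* the algebra T: polynomials over Q in the (countably many) generators;
   ring multiplication plays the role of the induced product (.) *)
Definition TT := {malg rat[cmonom Tidx]}.

Definition Tgen (i : Tidx) : TT := << ucm i >>.

Definition T (k l : int) : TT :=
  if (k == 0) && (l == 0) then -1
  else if (k == -1) && (l == 1) then -1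
  else match k, l with
       | Posz k', Posz l' =>
           if insub (k', l') is Some i then Tgen i else 0
       | _, _ => 0
       end.

Definition Tk (i : Tidx) : int := (val i).1.
Definition Tl (i : Tidx) : int := (val i).2.

(* the unique derivation of TT sending the generator i to delta i *)
Definition derivation_ext (delta : Tidx -> TT) (f : TT) : TT :=
  \sum_(m <- msupp f)
     f@_m *: \sum_(i <- finsupp (cmonom_val m))
                ((cmonom_val m i)%:R * << divcm m (ucm i) >> * delta i).

Definition Dop : TT -> TT :=
  derivation_ext (fun i => T (Tk i + 1) (Tl i + 1)).

Definition Wop : TT -> TT :=
  derivation_ext (fun i => (Tk i + Tl i)%:~R *: Tgen i).

Definition dop : TT -> TT :=
  derivation_ext (fun i =>
    (Tk i * (Tl i - 1))%:~R *: T (Tk i - 1) (Tl i - 1)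
    - (if Tk i + Tl i == 2 then (1 / 2 : rat) else 0)%:A).

Definition mweight_T (m : cmonom Tidx) : nat :=
  (\sum_(i <- finsupp (cmonom_val m)) cmonom_val m i * ((val i).1 + (val i).2))%N.

Definition homog (w : nat) (f : TT) : bool :=
  all (fun m => mweight_T m == w) (msupp f).

Definition RCbracket (k l n : nat) (f g : TT) : TT :=
  \sum_(r < n.+1)
    ((-1) ^+ r * ('C((k + n).-1, n - r) * 'C((l + n).-1, r))%:R)
      *: (iter r Dop f * iter (n - r) Dop g).

From HB Require Import structures.
From mathcomp Require Import all_boot all_algebra.
From mathcomp Require Import finmap monalg.
From mathcomp Require Import ring zify.
Set Implicit Arguments.
Unset Strict Implicit.
Unset Printing Implicit Defensive.
Import GRing.Theory.
Local Open Scope ring_scope.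

(* The derivations D, d and W of the polynomial algebra T satisfy the sl_2
   relations [d, D] = W and [W, D] = 2 D; being identities between derivations,
   they only need to be checked on the generators T_{k,l}.  If f has weight k
   and d f = 0, they give d (D^j f) = j (k + j - 1) D^(j-1) f.  Applying d to
   [f, g]_n therefore produces two sums which cancel term by term, thanks to
   the binomial identity
     C(k+r+s, s) C(l+s+r, r+1) (r+1)(k+r) = C(k+r+s, s+1) C(l+s+r, r) (s+1)(l+s). *)

Section Leibniz.
Variable A : pzRingType.

Definition leibniz_at (p : A -> A) x y := p (x * y) = p x * y + x * p y.
Definition leibniz (p : A -> A) := forall x y, leibniz_at p x y.

Lemma leibniz1 (p : A -> A) : leibniz p -> p 1 = 0.
Proof.
move=> pM; have := pM 1 1; rewrite /leibniz_at !mulr1 mul1r => p1.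
by apply: (addrI (p 1)); rewrite addr0 -p1.
Qed.

Lemma leibniz_at_sum (p : {additive A -> A}) (I J : Type) (r : seq I) (s : seq J)
    (X : I -> A) (Y : J -> A) :
  (forall i j, leibniz_at p (X i) (Y j)) ->
  leibniz_at p (\sum_(i <- r) X i) (\sum_(j <- s) Y j).
Proof.
move=> pXY; rewrite /leibniz_at [p (\sum_(i <- r) _)]raddf_sum !mulr_suml raddf_sum.
rewrite -big_split; apply: eq_bigr => i _.
rewrite [p (\sum_(j <- s) _)]raddf_sum !mulr_sumr raddf_sum -big_split.
by apply: eq_bigr => j _; apply: pXY.
Qed.

Lemma leibnizD (p q : A -> A) : leibniz p -> leibniz q -> leibniz (p \+ q).
Proof. by move=> pM qM x y; rewrite /leibniz_at /= pM qM mulrDl mulrDr addrACA. Qed.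

Lemma leibnizB (p q : A -> A) : leibniz p -> leibniz q -> leibniz (p \- q).
Proof. by move=> pM qM x y; rewrite /leibniz_at /= pM qM mulrBl mulrBr opprD addrACA. Qed.

Lemma leibniz_commutator (p q : {additive A -> A}) :
  leibniz p -> leibniz q -> leibniz ((p \o q) \- (q \o p)).
Proof.
move=> pM qM x y; rewrite /leibniz_at /=.
have compM (r s : {additive A -> A}) : leibniz r -> leibniz s ->
    r (s (x * y)) = r (s x) * y + x * r (s y) + (s x * r y + r x * s y).
  by move=> rM sM; rewrite sM !raddfD /= !rM [_ + x * _]addrC addrACA.
rewrite compM // compM // [_ + (p x * _ + _)]addrC [p x * _ + _]addrC addrKA.
by rewrite mulrBl mulrBr opprD addrACA.
Qed.

Lemma leibniz_mul_eq0 (p : A -> A) x y : leibniz p -> p x = 0 -> p y = 0 -> p (x * y) = 0.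
Proof. by move=> pM px0 py0; rewrite pM px0 py0 mul0r mulr0 addr0. Qed.

End Leibniz.

Lemma leibniz_alg (R : pzRingType) (A : algType R) (p : {linear A -> A}) c :
  leibniz p -> p c%:A = 0.
Proof. by move=> pM; rewrite linearZ /= (leibniz1 pM) scaler0. Qed.

Lemma leibniz_subr_alg (R : pzRingType) (A : algType R) (p : {linear A -> A}) x c :
  leibniz p -> p (x - c%:A) = p x.
Proof. by move=> pM; rewrite linearB /= (leibniz_alg _ pM) subr0. Qed.

Lemma leibniz_atZ (R : pzRingType) (A : algType R) (p : {linear A -> A}) a b x y :
  leibniz_at p x y -> leibniz_at p (a *: x) (b *: y).
Proof.
rewrite /leibniz_at => pxy; rewrite -scalerAl -scalerAr !linearZ /= pxy.
by rewrite -!scalerAl -!scalerAr !scalerDr.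
Qed.

Lemma odd_addSS (a b : nat) : odd (a.+1 + b.+1) = odd (a + b).
Proof. by rewrite addSn addnS /= negbK. Qed.

Lemma scaler_natBB_eq0 (R : pzRingType) (V : lmodType R) (n1 n2 n3 : nat) (v : V) :
  n1 = (n2 + n3)%N -> n1%:R *: v - n2%:R *: v - n3%:R *: v = 0.
Proof. by move=> ->; rewrite natrD scalerDl addrAC addrK subrr. Qed.

Lemma bin_rankin_cohen (k l r s : nat) :
  ('C(k + r + s, s) * 'C(l + s + r, r.+1) * (r.+1 * (k + r)) =
   'C(k + r + s, s.+1) * 'C(l + s + r, r) * (s.+1 * (l + s)))%N.
Proof.
have := mul_bin_left (l + s + r) r; have := mul_bin_left (k + r + s) s.
rewrite !addnK => binS binR.
transitivity ('C(k + r + s, s) * (k + r) * (r.+1 * 'C(l + s + r, r.+1)))%N; first by ring.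
rewrite binR; transitivity (s.+1 * 'C(k + r + s, s.+1) * 'C(l + s + r, r) * (l + s))%N.
  by rewrite binS; ring.
by ring.
Qed.

Definition rc_bracket (R : pzRingType) (A : lalgType R) (D : A -> A) (k l n : nat) (f g : A) : A :=
  \sum_(r < n.+1)
    ((-1) ^+ r * ('C((k + n).-1, n - r) * 'C((l + n).-1, r))%:R)
      *: (iter r D f * iter (n - r) D g).

Lemma rc_coef_cancel (R : pzRingType) (k l n r : nat) : (r < n)%N ->
  (-1) ^+ r.+1 * ('C((k + n).-1, n - r.+1) * 'C((l + n).-1, r.+1))%:R
      * (r.+1 * (k + r.+1).-1)%:R
  + (-1) ^+ r * ('C((k + n).-1, n - r) * 'C((l + n).-1, r))%:R
      * ((n - r) * (l + (n - r)).-1)%:R = 0 :> R.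
Proof.
move=> lt_rn; have [s ->] : exists s, n = (r + s.+1)%N by exists (n - r.+1)%N; lia.
have -> : (r + s.+1 - r.+1 = s)%N by lia.
have -> : (r + s.+1 - r = s.+1)%N by lia.
have -> : ((k + (r + s.+1)).-1 = k + r + s)%N by lia.
have -> : ((l + (r + s.+1)).-1 = l + s + r)%N by lia.
rewrite !addnS !succnK -!mulrA -!natrM bin_rankin_cohen.
by rewrite exprS mulN1r mulNr addNr.
Qed.

Section RankinCohen.
Variables (R : pzRingType) (A : algType R) (D d : {linear A -> A}) (W : A -> A).
Hypothesis d_leibniz : leibniz d.
Hypothesis dD : forall x, d (D x) = D (d x) + W x.
Hypothesis WD : forall x, W (D x) = D (W x) + D x *+ 2.

Section Lowering.
Variables (k : nat) (f : A).
Hypotheses (Wf : W f = k%:R *: f) (df : d f = 0).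

Lemma W_iterD j : W (iter j D f) = (k + j.*2)%:R *: iter j D f.
Proof.
elim: j => [|j IHj]; first by rewrite addn0.
rewrite iterS WD IHj linearZ -scaler_nat -scalerDl -natrD.
by congr (_%:R *: _); lia.
Qed.

Lemma d_iterD j : d (iter j D f) = (j * (k + j).-1)%:R *: iter j.-1 D f.
Proof.
elim: j => [|j IHj]; first by rewrite mul0n scale0r.
rewrite iterS dD IHj W_iterD linearZ /=.
case: j {IHj} => [|j]; first by rewrite mul0n scale0r add0r addn0 mul1n addn1.
rewrite -iterS -scalerDl -natrD; congr (_%:R *: _).
by rewrite doubleS !addnS !succnK -muln2; ring.
Qed.

End Lowering.

Lemma d_rc_bracket_eq0 (k l n : nat) (f g : A) :
  W f = k%:R *: f -> W g = l%:R *: g -> d f = 0 -> d g = 0 ->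
  d (rc_bracket D k l n f g) = 0.
Proof.
move=> Wf Wg df dg; rewrite /rc_bracket linear_sum /=.
under eq_bigr => r _ do
  rewrite linearZ /= d_leibniz (d_iterD Wf df) (d_iterD Wg dg) -scalerAl -scalerAr scalerDr.
rewrite big_split /= big_ord_recl big_ord_recr /= mul0n subnn mul0n !scale0r !scaler0 add0r addr0.
rewrite -big_split big1 // => r _ /=.
by rewrite /bump leq0n add1n add0n -subnS !scalerA -scalerDl rc_coef_cancel ?scale0r.
Qed.

End RankinCohen.

Section MonoidAlgebra.
Variables (K : monomType) (R : ringType).

Lemma malgUZ (c : R) (m : K) : << c *g m >> = c *: << m >> :> {malg R[K]}.
Proof. by rewrite -mul_malgC malgM_def fgmulUU mulr1 mul1m. Qed.

Lemma malgUM (m1 m2 : K) : << mmul m1 m2 >> = << m1 >> * << m2 >> :> {malg R[K]}.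
Proof. by rewrite malgM_def fgmulUU mulr1. Qed.

Lemma malgE_scale (f : {malg R[K]}) : f = \sum_(m <- msupp f) f@_m *: << m >>.
Proof. by rewrite {1}(monalgE f); apply: eq_bigr => m _; apply: malgUZ. Qed.

End MonoidAlgebra.

Section LinearExtension.
Variables (K : choiceType) (R : ringType) (V : lmodType R) (F : K -> V).

Definition malg_extend (f : {malg R[K]}) : V := \sum_(m <- msupp f) f@_m *: F m.

Lemma malg_extendEw (S : {fset K}) f :
  (msupp f `<=` S)%fset -> malg_extend f = \sum_(m <- S) f@_m *: F m.
Proof.
by move=> le_fS; apply: big_fset_incl => // m _ /mcoeff_outdom ->; rewrite scale0r.
Qed.

Lemma malg_extend_is_linear : linear malg_extend.
Proof.
move=> c f g; pose S := (msupp f `|` msupp g)%fset.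
have le_fgS : (msupp (c *: f + g) `<=` S)%fset.
  exact: fsubset_trans (msuppD_le _ _) (fsetSU _ (msuppZ_le _ _)).
rewrite (malg_extendEw le_fgS) (malg_extendEw (fsubsetUl (msupp f) (msupp g))).
rewrite (malg_extendEw (fsubsetUr (msupp f) (msupp g))) scaler_sumr -big_split.
by apply: eq_bigr => m _; rewrite mcoeffD mcoeffZ scalerDl scalerA.
Qed.

HB.instance Definition _ := GRing.isLinear.Build R {malg R[K]} V *:%R malg_extend
  malg_extend_is_linear.

Lemma malg_extendU m : malg_extend << m >> = F m.
Proof. by rewrite (malg_extendEw msuppU_le) big_seq_fset1 mcoeffUU scale1r. Qed.

End LinearExtension.

Section PolynomialDerivation.
Variables (I : choiceType) (R : comRingType).
Local Notation A := {malg R[cmonom I]}.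
Implicit Types (delta : I -> A) (m : cmonom I).

(* Unifying two distinct monomials unfolds their finite-support representation
   and is prohibitively slow; hence the rewrites below are confined
   with [in LHS]/[in RHS], and some steps are stated on abstract ring elements. *)

Definition monom_derivative delta m : A :=
  \sum_(i <- finsupp (cmonom_val m))
     ((cmonom_val m i)%:R * << divcm m (ucm i) >> * delta i).

Definition derivation_of delta := malg_extend (monom_derivative delta).

Lemma derivation_of_monom delta m : derivation_of delta << m >> = monom_derivative delta m.
Proof. exact: malg_extendU. Qed.

Lemma derivation_of_U delta i : derivation_of delta << ucm i >> = delta i.
Proof.
rewrite derivation_of_monom /monom_derivative mdomU big_seq_fset1 ucmE eqxx mul1r.
have -> : divcm (ucm i) (ucm i) = mone by apply/eqP/cmP => j; rewrite divcmE subnn cm1.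
by rewrite mpolyC1E mul1r.
Qed.

Lemma divcmM_l m1 m2 i : (0 < m1 i)%N ->
  divcm (mmul m1 m2) (ucm i) = mmul (divcm m1 (ucm i)) m2.
Proof.
move=> m1i_gt0; apply/eqP/cmP => j; rewrite divcmE !cmM divcmE ucmE.
by case: eqP => [<-|_] /=; lia.
Qed.

Lemma natr_monom_divM m1 m2 i :
  (m1 i)%:R * << divcm (mmul m1 m2) (ucm i) >> =
  (m1 i)%:R * << divcm m1 (ucm i) >> * << m2 >> :> A.
Proof.
rewrite -mulrA -malgUM; case: (posnP (m1 i)) => [->|m1i_gt0].
  by rewrite [LHS]mul0r [RHS]mul0r.
by rewrite [in LHS](divcmM_l m2 m1i_gt0).
Qed.

Lemma monom_derivativeEw delta m (S : {fset I}) : (finsupp m `<=` S)%fset ->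
  monom_derivative delta m = \sum_(i <- S) ((m i)%:R * << divcm m (ucm i) >> * delta i).
Proof.
move=> le_mS; apply: big_fset_incl => // i _.
by rewrite -cmE_eq0 => /eqP ->; rewrite !mul0r.
Qed.

Lemma monom_derivativeM delta m1 m2 :
  monom_derivative delta (mmul m1 m2) =
  monom_derivative delta m1 * << m2 >> + << m1 >> * monom_derivative delta m2.
Proof.
pose S := (finsupp m1 `|` finsupp m2)%fset.
rewrite (@monom_derivativeEw _ _ S) ?mdomD // (@monom_derivativeEw _ m1 S) ?fsubsetUl //.
rewrite (@monom_derivativeEw _ m2 S) ?fsubsetUr // mulr_suml mulr_sumr -big_split.
apply: eq_bigr => i _; rewrite cmM natrD.
have termM (a b P Q1 Q2 M1 M2 d : A) : a * P = a * Q1 * M2 -> b * P = b * Q2 * M1 ->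
    (a + b) * P * d = a * Q1 * d * M2 + M1 * (b * Q2 * d).
  by move=> h1 h2; rewrite !mulrDl h1 h2; ring.
apply: termM; first exact: natr_monom_divM.
by rewrite mulmC; apply: natr_monom_divM.
Qed.

Lemma leibniz_of_monom (phi : {linear A -> A}) (F : cmonom I -> A) :
  (forall m, phi << m >> = F m) ->
  (forall m1 m2, F (mmul m1 m2) = F m1 * << m2 >> + << m1 >> * F m2) ->
  leibniz phi.
Proof.
move=> phiU FM x y; rewrite (malgE_scale x) (malgE_scale y).
apply: leibniz_at_sum => m1 m2; apply: leibniz_atZ.
by have := FM m1 m2; rewrite -!phiU malgUM.
Qed.

Lemma derivation_of_leibniz delta : leibniz (derivation_of delta).
Proof. exact: leibniz_of_monom (derivation_of_monom delta) (monom_derivativeM delta). Qed.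

Lemma cmonomUdiv m i : i \in finsupp m -> m = mmul (ucm i) (divcm m (ucm i)).
Proof.
rewrite -cmE_neq0 => mi_neq0; apply/eqP/cmP => j; rewrite cmM divcmE !ucmE.
by case: eqP => [<-|_] /=; lia.
Qed.

Lemma cmonom_ind (P : cmonom I -> Prop) :
  P mone -> (forall i m, P m -> P (mmul (ucm i) m)) -> forall m, P m.
Proof.
move=> P1 PU m; have [n] := ubnP (mdeg m); elim: n m => // n IHn m.
case: (fset_0Vmem (finsupp m)) => [supp0 _ | [i i_m] deg_m].
  by have -> : m = mone by apply: mdeg_eq0I; rewrite mdegE supp0 big_nil.
rewrite (cmonomUdiv i_m); apply/PU/IHn.
by move: deg_m; rewrite {1}(cmonomUdiv i_m) mdegM mdegU.
Qed.

Lemma derivation_eq0 (phi : {linear A -> A}) :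
  leibniz phi -> (forall i, phi << ucm i >> = 0) -> forall x, phi x = 0.
Proof.
move=> phiM phiU x; rewrite (malgE_scale x) linear_sum big1 // => m _.
suff phim0 : phi << m >> = 0 by rewrite linearZ /= phim0 scaler0.
elim/cmonom_ind: m => [|i m IHm]; first by rewrite mpolyC1E (leibniz1 phiM).
by rewrite malgUM; exact: leibniz_mul_eq0 phiM (phiU i) IHm.
Qed.

Lemma derivation_of_euler (w : I -> R) m :
  derivation_of (fun i => w i *: << ucm i >>) << m >> =
  (\sum_(i <- finsupp m) (m i)%:R * w i) *: << m >>.
Proof.
rewrite derivation_of_monom scaler_suml; apply: eq_big_seq => i i_m.
rewrite [in RHS](_ : << m >> = << ucm i >> * << divcm m (ucm i) >>); last first.
  by rewrite -malgUM -cmonomUdiv.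
have scaleE (n : nat) (c : R) (X U : A) : n%:R * X * (c *: U) = (n%:R * c) *: (U * X).
  by rewrite -scalerAr -scalerA scaler_nat mulr_natl mulrnAl scalerMnr mulrC.
exact: scaleE.
Qed.

Lemma derivation_of_homog (w : I -> R) (c : R) f :
  (forall m, m \in msupp f -> \sum_(i <- finsupp m) (m i)%:R * w i = c) ->
  derivation_of (fun i => w i *: << ucm i >>) f = c *: f.
Proof.
move=> wf; rewrite [in LHS](malgE_scale f) [derivation_of _ _]linear_sum.
rewrite [in RHS](malgE_scale f) scaler_sumr; apply: eq_big_seq => m m_f.
transitivity (f@_m *: derivation_of (fun i => w i *: << ucm i >>) << m >>).
  exact: linearZ.
by rewrite derivation_of_euler (wf m m_f) !scalerA mulrC.
Qed.

End PolynomialDerivation.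

(* Over [Tidx] and [rat], [derivation_ext delta] unfolds to [derivation_of delta]. *)
HB.instance Definition _ delta :=
  GRing.Linear.copy (derivation_ext delta) (derivation_of delta).

Lemma Dop_leibniz : leibniz Dop. Proof. exact: derivation_of_leibniz. Qed.
Lemma dop_leibniz : leibniz dop. Proof. exact: derivation_of_leibniz. Qed.
Lemma Wop_leibniz : leibniz Wop. Proof. exact: derivation_of_leibniz. Qed.

(* The hypothesis 0 < b excludes the convention T_{0,0} = -1. *)
Lemma T_natE (a b : nat) : (0 < b)%N ->
  T a b = if insub (a, b) is Some i then Tgen i else 0.
Proof. by case: b => // b _; rewrite /T [(b.+1)%:Z == 0]eqz_nat andbF. Qed.

Lemma derivation_ext_Tgen delta i : derivation_ext delta (Tgen i) = delta i.
Proof. exact: (derivation_of_U (R := rat) delta i). Qed.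

Lemma T_idx (a b : nat) (ab : (0 < b)%N && ~~ odd (a + b)) :
  T a b = Tgen (exist _ (a, b) ab).
Proof.
case/andP: (ab) => b_gt0 _; rewrite T_natE //.
by case: insubP => [i _ vi|/negP[]//]; congr Tgen; apply: val_inj.
Qed.

Lemma T_odd (a b : nat) : (0 < b)%N -> odd (a + b) -> T a b = 0.
Proof. by move=> b_gt0 odd_ab; rewrite T_natE // insubN //= odd_ab andbF. Qed.

Lemma Dop_T (a b : nat) : (0 < b)%N -> Dop (T a b) = T a.+1 b.+1.
Proof.
move=> b_gt0; have [odd_ab|even_ab] := boolP (odd (a + b)).
  rewrite (T_odd b_gt0 odd_ab) (T_odd _ (_ : odd _)) ?odd_addSS //; exact: raddf0.
have ab : (0 < b)%N && ~~ odd (a + b) by rewrite b_gt0.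
by rewrite (T_idx ab) /Dop derivation_ext_Tgen /Tk /Tl /= -!PoszD !addn1.
Qed.

Lemma Wop_T (a b : nat) : (0 < b)%N -> Wop (T a b) = (a + b)%:R *: T a b.
Proof.
move=> b_gt0; have [odd_ab|even_ab] := boolP (odd (a + b)).
  by rewrite (T_odd b_gt0 odd_ab) scaler0; apply: raddf0.
have ab : (0 < b)%N && ~~ odd (a + b) by rewrite b_gt0.
by rewrite (T_idx ab) /Wop derivation_ext_Tgen /Tk /Tl /= -PoszD -pmulrn.
Qed.

Lemma dop_TS (a b : nat) : (0 < b)%N -> dop (T a.+1 b.+1) = (a.+1 * b)%:R *: T a b.
Proof.
move=> b_gt0; have [odd_ab|even_ab] := boolP (odd (a + b)).
  rewrite (T_odd _ (_ : odd _)) ?odd_addSS // (T_odd b_gt0 odd_ab) scaler0.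
  exact: raddf0.
have abS : (0 < b.+1)%N && ~~ odd (a.+1 + b.+1) by rewrite odd_addSS.
rewrite (T_idx abS) /dop derivation_ext_Tgen /Tk /Tl /= -!predn_int //=.
rewrite -PoszD eqz_nat (_ : (a.+1 + b.+1 == 2)%N = false); last by apply/eqP; lia.
by rewrite -PoszM -pmulrn scale0r subr0.
Qed.

Lemma Dop_dop_T (a b : nat) : (0 < b)%N -> Dop (dop (T a b)) = (a * b.-1)%:R *: T a b.
Proof.
move=> b_gt0; have [odd_ab|even_ab] := boolP (odd (a + b)).
  by rewrite (T_odd b_gt0 odd_ab) scaler0 (_ : dop 0 = 0); apply: raddf0.
have ab : (0 < b)%N && ~~ odd (a + b) by rewrite b_gt0.
rewrite [in LHS](T_idx ab) /dop derivation_ext_Tgen /Tk /Tl /=.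
rewrite -[Posz b - 1]predn_int // -PoszM -pmulrn [Dop _](leibniz_subr_alg _ _ Dop_leibniz).
case: a {ab even_ab} => [|a]; first by rewrite mul0n !scale0r; apply: raddf0.
rewrite -[Posz a.+1 - 1]predn_int //=.
case: b b_gt0 => [//|[|b]] _; first by rewrite muln0 !scale0r; apply: raddf0.
by rewrite -Dop_T //; apply: linearZ.
Qed.

Lemma dop_Dop x : dop (Dop x) = Dop (dop x) + Wop x.
Proof.
have gen i : dop (Dop (Tgen i)) - Dop (dop (Tgen i)) - Wop (Tgen i) = 0.
  case: i => [[a b] ab]; rewrite -(T_idx ab); case/andP: ab => b_gt0 _.
  rewrite Dop_T // dop_TS // Dop_dop_T // Wop_T //; apply: scaler_natBB_eq0.
  by case: b b_gt0 => // b _; rewrite mulSn mulnS /=; lia.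
apply/eqP; rewrite -subr_eq0 opprD addrA; apply/eqP.
exact: derivation_eq0
  (leibnizB (leibniz_commutator dop_leibniz Dop_leibniz) Wop_leibniz) gen x.
Qed.

Lemma Wop_Dop x : Wop (Dop x) = Dop (Wop x) + Dop x *+ 2.
Proof.
have gen i : Wop (Dop (Tgen i)) - Dop (Wop (Tgen i)) - (Dop (Tgen i) + Dop (Tgen i)) = 0.
  case: i => [[a b] ab]; rewrite -(T_idx ab); case/andP: ab => b_gt0 _.
  have DZ : Dop ((a + b)%:R *: T a b) = (a + b)%:R *: T a.+1 b.+1.
    by rewrite -Dop_T //; apply: linearZ.
  rewrite Wop_T // DZ Dop_T // Wop_T // -mulr2n -scaler_nat; apply: scaler_natBB_eq0.
  by rewrite !addSn addnS addn2.
apply/eqP; rewrite -subr_eq0 opprD addrA; apply/eqP.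
exact: derivation_eq0
  (leibnizB (leibniz_commutator Wop_leibniz Dop_leibniz) (leibnizD Dop_leibniz Dop_leibniz)) gen x.
Qed.

Lemma Wop_homog k f : homog k f -> Wop f = k%:R *: f.
Proof.
move=> /allP hom_f; apply: (derivation_of_homog (w := fun i => (Tk i + Tl i)%:~R)) => m m_f.
rewrite -(eqP (hom_f m m_f)) /mweight_T natr_sum; apply: eq_bigr => i _.
by rewrite natrM /Tk /Tl -PoszD -pmulrn.
Qed.

Theorem proposition5p3p2 (k l n : nat) (f g : TT) :
  homog k f -> homog l g ->
  dop f = 0 -> dop g = 0 ->
  dop (RCbracket k l n f g) = 0.
Proof.
move=> hom_f hom_g df dg.
exact (d_rc_bracket_eq0 dop_leibniz dop_Dop Wop_Dop n
         (Wop_homog hom_f) (Wop_homog hom_g) df dg).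
Qed.
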